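(* Let $(\mathcal{P},d)$ be a 1-2-metric and consider the greedy-routing network creation game on it with edge price $\alpha>0$. (i) If $\alpha<\tfrac12$, the Maximum Domination Set Graph is the unique Nash equilibrium. (ii) If $\alpha=\tfrac12$, the Greedy Equilibria are exactly the Domination Set Graphs, and the Nash equilibria are exactly the Domination Set Graphs in which $W_2^+(u)=\emptyset$ for every node $u$ (no node builds an edge to a node it reaches via a path of two 1-edges). (iii) If $\alpha>\tfrac12$, every Minimum Domination Set Graph is a Greedy Equilibrium.
   Context: A 1-2-metric is a finite metric space $(\mathcal{P},d)$ with $d(u,v)\in\{1,2\}$ for all distinct $u,v$; arcs of length 1 are 1-edges, of length 2 are 2-edges. Game: agents are the points of $\mathcal{P}$; agent $u$'s strategy is $S_u\subseteq\mathcal{P}\setminus\{u\}$; a profile defines the directed network with arcs $(u,v)$, $v\in S_u$, of length $d(u,v)$; networks are identified with profiles. A greedy path from $u$ to $v$ is a directed path $u=x_1,\dots,x_j=v$ of arcs with $d(x_i,v)>d(x_{i+1},v)$ for all $i$. $\mathrm{stretch}(u,v)$ is the minimum length of a greedy path from $u$ to $v$ divided by $d(u,v)$, or a fixed sufficiently large penalty constant $Z$ if none exists. Cost: $c_u=\sum_{v\ne u}\mathrm{stretch}(u,v)+\alpha|S_u|$. Nash equilibrium: no agent can strictly decrease its cost by changing its strategy. Greedy Equilibrium: no agent can strictly decrease its cost by adding one element to, deleting one element from, or swapping one element of its strategy. Notation for a network $G$ and node $u$: $N(u)$ = out-neighbours of $u$; $W_2(u)=\{v\in N(u):d(u,v)=2\}$;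 $W_{1\to1}(u)$ = nodes $w\ne u$ with some $v$ such that $d(u,v)=d(v,w)=1$ and $(u,v),(v,w)$ are arcs; $W_2^+(u)=W_2(u)\cap W_{1\to1}(u)$. $G^1_{-u}$ is the directed graph on $\mathcal{P}\setminus\{u\}$ with arc $(v,w)$ whenever $d(v,w)=1$. A vertex set $D$ of a directed graph $H$ is dominating if every vertex outside $D$ has an in-neighbour in $D$. A Domination Set Graph (DSG) is a network $G$ such that (i) $G$ contains every arc $(v,w)$ with $d(v,w)=1$; (ii) for every $u$, $N(u)$ is dominating in $G^1_{-u}$; (iii) for every $u$ there is no $N'\subseteq\mathcal{P}\setminus\{u\}$ obtained from $N(u)$ by deleting one element or replacing one element by another, such that $N'$ contains all $v$ with $d(u,v)=1$, $N'$ is dominating in $G^1_{-u}$, and $|\{v\in N':d(u,v)=2\}\cap W_{1\to1}(u)|<|W_2^+(u)|$. A Minimum Domination Set Graph (MinDSG) is a DSG in which for every $u$, $|W_2(u)|$ is minimum among all out-neighbourhoods $N'\subseteq\mathcal{P}\setminus\{u\}$ that contain all $v$ with $d(u,v)=1$ and are dominating in $G^1_{-u}$. The Maximum Domination Set Graph (MaxDSG) is the network containing every arc $(u,w)$, $u\ne w$, except the 2-edges $(u,w)$ for which some $v$ satisfies $d(u,v)=d(v,w)=1$. *)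

From HB Require Import structures.
From mathcomp Require Import all_boot all_order all_algebra.
From mathcomp Require Import boolp.
Set Implicit Arguments. Unset Strict Implicit. Unset Printing Implicit Defensive.
Import Order.TTheory GRing.Theory Num.Theory.
Local Open Scope ring_scope.

(* A 1-2-metric on the finite point set P: d u u = 0, symmetric,
   d u v in {1,2} for distinct u v (the triangle inequality then holds
   automatically). *)
Definition is_12metric (P : finType) (d : P -> P -> nat) : Prop :=
  [/\ forall u, d u u = 0%N,
      forall u v, d u v = d v u
    & forall u v, u != v -> d u v = 1%N \/ d u v = 2%N].

Definition profile (P : finType) := {ffun P -> {set P}}.

Definition valid_profile (P : finType) (S : profile P) : Prop :=
  forall u, u \notin S u.

Definition upd (P : finType) (S : profile P) (u : P) (T : {set P}) : profile P :=
  [ffun w => if w == u then T else S w].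

Definition greedy_path (P : finType) (d : P -> P -> nat) (S : profile P)
  (v x : P) (p : seq P) : bool :=
  path (fun a b => (b \in S a) && (d b v < d a v)%N) x p && (last x p == v).

Definition path_len (P : finType) (d : P -> P -> nat) (x : P) (p : seq P) : nat :=
  sumn (pairmap d x p).

Definition greedy_len (P : finType) (d : P -> P -> nat) (S : profile P)
  (u v : P) (n : nat) : Prop :=
  exists p, greedy_path d S v u p /\ path_len d u p = n.

Lemma ex_asbool_of (Q : nat -> Prop) :
  (exists n, Q n) -> exists n, `[< Q n >].
Proof. by case=> n Hn; exists n; apply/asboolP. Qed.

Definition stretch (R : realFieldType) (P : finType) (d : P -> P -> nat) (Z : R) (S : profile P)
  (u v : P) : R :=
  match pselect (exists n, greedy_len d S u v n) with
  | left H =>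
      (ex_minn (@ex_asbool_of (greedy_len d S u v) H))%:R / (d u v)%:R
  | right _ => Z
  end.

Definition cost (R : realFieldType) (P : finType) (d : P -> P -> nat) (alpha Z : R)
  (S : profile P) (u : P) : R :=
  \sum_(v | v != u) stretch d Z S u v + alpha * (#|S u|)%:R.

Definition nash_eq (R : realFieldType) (P : finType) (d : P -> P -> nat) (alpha Z : R)
  (S : profile P) : Prop :=
  forall (u : P) (T : {set P}), u \notin T ->
    ~ (cost d alpha Z (upd S u T) u < cost d alpha Z S u).

Definition del_or_swap (P : finType) (u : P) (A T : {set P}) : Prop :=
  (exists2 w, w \in A & T = A :\ w) \/
  (exists w w', [/\ w \in A, w' \notin A, w' != u & T = (A :\ w) :|: [set w']]).

Definition greedy_move (P : finType) (u : P) (A T : {set P}) : Prop :=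
  (exists w, [/\ w \notin A, w != u & T = A :|: [set w]]) \/ del_or_swap u A T.

Definition greedy_eq (R : realFieldType) (P : finType) (d : P -> P -> nat) (alpha Z : R)
  (S : profile P) : Prop :=
  forall (u : P) (T : {set P}), greedy_move u (S u) T ->
    ~ (cost d alpha Z (upd S u T) u < cost d alpha Z S u).

Definition W2 (P : finType) (d : P -> P -> nat) (S : profile P) (u : P) : {set P} :=
  [set v in S u | d u v == 2%N].

Definition W11 (P : finType) (d : P -> P -> nat) (S : profile P) (u : P) : {set P} :=
  [set w | (w != u) &&
     [exists v, [&& d u v == 1%N, d v w == 1%N, v \in S u & w \in S v]]].

Definition W2plus (P : finType) (d : P -> P -> nat) (S : profile P) (u : P) : {set P} :=
  W2 d S u :&: W11 d S u.

(* D is dominating in G^1_{-u} (vertex set P \ {u}, arcs (v,w) with d v w = 1):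
   D avoids u and every vertex x <> u outside D has an in-neighbour in D. *)
Definition dominating (P : finType) (d : P -> P -> nat) (u : P) (D : {set P}) : Prop :=
  u \notin D /\
  forall x, x != u -> x \notin D -> exists2 y, y \in D & d y x = 1%N.

Definition contains_1nbrs (P : finType) (d : P -> P -> nat) (u : P) (D : {set P}) : Prop :=
  forall v, d u v = 1%N -> v \in D.

Definition DSG (P : finType) (d : P -> P -> nat) (S : profile P) : Prop :=
  [/\ (forall v w, d v w = 1%N -> w \in S v),
      (forall u, dominating d u (S u))
    & (forall u, ~ exists N' : {set P},
          [/\ del_or_swap u (S u) N', contains_1nbrs d u N', dominating d u N'
            & (#|[set v in N' | d u v == 2%N] :&: W11 d S u| < #|W2plus d S u|)%N])].

Definition MinDSG (P : finType) (d : P -> P -> nat) (S : profile P) : Prop :=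
  DSG d S /\
  forall u (N' : {set P}), contains_1nbrs d u N' -> dominating d u N' ->
    (#|W2 d S u| <= #|[set v in N' | d u v == 2%N]|)%N.

Definition MaxDSG (P : finType) (d : P -> P -> nat) : profile P :=
  [ffun u => [set w | (w != u) &&
     ~~ ((d u w == 2%N) && [exists v, (d u v == 1%N) && (d v w == 1%N)])]].

(* Since [d] only takes the values 1 and 2, a greedy path out of an agent [u]
   has at most two arcs, so the stretch from [u] to [v] is 1, 3/2 or the penalty
   [Z], and it is determined by [u]'s own strategy [T] and the 1-edges leaving [T].
   For [Z] large, a strategy can only be optimal among greedy moves if it is
   admissible: it contains all 1-neighbours of [u] and dominates [G^1_{-u}].
   For admissible [T], the cost of [u] is a constant plus
   [1/2 |W2plus| + (alpha - 1/2) |W2|]: a 2-edge to [v] costs [alpha - 1/2], plus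
   another [1/2] when [v] is already reached through two 1-edges.  Comparing these
   two counts gives the three regimes: below 1/2 buying every useful 2-edge
   (MaxDSG) is strictly best, at 1/2 only [|W2plus|] matters, and above 1/2 no
   deletion or swap may decrease either count, which a MinDSG guarantees. *)

From HB Require Import structures.
From mathcomp Require Import all_boot all_order all_algebra boolp.
From mathcomp Require Import zify lra.
Import Order.TTheory GRing.Theory Num.Theory.
Local Open Scope ring_scope.
Set Implicit Arguments. Unset Strict Implicit. Unset Printing Implicit Defensive.

Lemma upd_id (P : finType) (S : profile P) u : upd S u (S u) = S.
Proof. by apply/ffunP => w; rewrite ffunE; case: eqP => // ->. Qed.

Section StretchValue.
Variables (R : realFieldType) (P : finType) (d : P -> P -> nat) (Z : R).
Variables (S : profile P) (u v : P).

Lemma stretch_min m : greedy_len d S u v m ->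
  (forall n, greedy_len d S u v n -> (m <= n)%N) ->
  stretch d Z S u v = m%:R / (d u v)%:R.
Proof.
move=> Hm Hmin; rewrite /stretch; case: pselect => [H|[]]; last by exists m.
case: ex_minnP => k /asboolP Hk Hkmin.
suff -> : k = m by [].
by apply/eqP; rewrite eqn_leq Hmin // Hkmin //; apply/asboolP.
Qed.

Lemma stretch_none : (forall n, ~ greedy_len d S u v n) -> stretch d Z S u v = Z.
Proof. by move=> H; rewrite /stretch; case: pselect => // -[n]; case/H. Qed.

End StretchValue.

Section SumBounds.
Variables (R : realDomainType) (I : finType) (Q : pred I).

Lemma ler_ltr_sum i0 (F G : I -> R) : (forall i, Q i -> F i <= G i) -> Q i0 ->
  F i0 < G i0 -> \sum_(i | Q i) F i < \sum_(i | Q i) G i.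
Proof.
move=> FG Qi0 lt0; rewrite (bigD1 i0 Qi0) [X in _ < X](bigD1 i0 Qi0) /=.
by apply: ltr_leD => //; apply: ler_sum => i /andP [Qi _]; apply: FG.
Qed.

Lemma ler_term_sum i0 (F : I -> R) : (forall i, Q i -> 0 <= F i) -> Q i0 ->
  F i0 <= \sum_(i | Q i) F i.
Proof.
move=> F0 Qi0; rewrite (bigD1 i0 Qi0) /= lerDl.
by apply: sumr_ge0 => i /andP [Qi _]; apply: F0.
Qed.

Lemma ler_sum_bound (F : I -> R) c : (forall i, Q i -> F i <= c) -> 0 <= c ->
  \sum_(i | Q i) F i <= #|I|%:R * c.
Proof.
move=> Fc c0; apply: le_trans (_ : \sum_(i | Q i) c <= _); first exact: ler_sum.
rewrite sumr_const -[c *+ _]mulr_natl ler_wpM2r // ler_nat; exact: max_card.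
Qed.

Lemma sum_mem_card (X : {set I}) : {subset X <= Q} ->
  \sum_(i | Q i) ((i \in X)%:R : R) = #|X|%:R.
Proof.
move=> XQ; rewrite -sum1_card natr_sum [RHS]big_mkcond [LHS]big_mkcond /=.
apply: eq_bigr => i _; have [iX|_] := boolP (i \in X); last by case: (Q i).
by have := XQ i iX; rewrite unfold_in => ->.
Qed.

End SumBounds.

Section GreedyRoutingGame.
Variables (R : realFieldType) (P : finType) (d : P -> P -> nat).
Hypothesis Hd : is_12metric d.

Lemma d_refl u : d u u = 0%N. Proof. by case: Hd. Qed.
Lemma d_sym u v : d u v = d v u. Proof. by case: Hd. Qed.
Lemma d_1or2 u v : u != v -> d u v = 1%N \/ d u v = 2%N.
Proof. by case: Hd => _ _; apply. Qed.
Lemma d_le2 u v : (d u v <= 2)%N.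
Proof. by case: (eqVneq u v) => [->|/d_1or2]; rewrite ?d_refl; lia. Qed.
Lemma d_gt0 u v : u != v -> (0 < d u v)%N.
Proof. by move=> /d_1or2; lia. Qed.
Lemma d_eq1_neq u v : d u v = 1%N -> u != v.
Proof. by apply: contra_eqN => /eqP ->; rewrite d_refl. Qed.

Definition hop11 u v := [exists x, (d u x == 1%N) && (d x v == 1%N)].

(* [x], bought by the deviating agent, forwards to [v] along a 1-edge of [S]. *)
Definition relay (S : profile P) (T : {set P}) v x :=
  [&& x \in T, d x v == 1%N & v \in S x].

Lemma relay_subset S (T1 T2 : {set P}) v x :
  T1 \subset T2 -> relay S T1 v x -> relay S T2 v x.
Proof. by move=> /subsetP sub /and3P [/sub xT dxv vS]; rewrite /relay xT dxv vS. Qed.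

Lemma greedy_len_upd S u T v n : u != v ->
  greedy_len d (upd S u T) u v n <->
  (v \in T /\ n = d u v) \/
  (d u v = 2%N /\ exists2 x, relay S T v x & n = (d u x).+1).
Proof.
move=> uv; split.
- case=> p [/andP [Hp /eqP Hl] <-].
  case: p Hp Hl => [|a [|b [|c q]]] /=.
  + by move=> _ vu; rewrite vu eqxx in uv.
  + rewrite ffunE eqxx andbT => /andP [aT _] av; subst a.
    by left; rewrite /path_len /= addn0.
  + rewrite ffunE eqxx andbT => /andP [/andP [aT ltu] /andP [bS lta]] bv; subst b.
    rewrite d_refl in lta.
    have dav : d a v = 1%N by have := d_le2 u v; lia.
    have au : a != u by apply: contraTneq ltu => ->; rewrite ltnn.
    rewrite ffunE (negbTE au) in bS.
    right; split; first by have := d_le2 u v; lia.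
    by exists a; rewrite /relay ?aT ?dav ?bS // /path_len /= dav addn0 addn1.
  + move=> /andP [/andP [_ l1] /andP [/andP [_ l2] /andP [/andP [_ l3] _]]] _.
    by have := d_le2 u v; lia.
- case=> [[vT ->]|[du2 [x /and3P [xT /eqP dxv vS] ->]]].
  + exists [:: v]; split; last by rewrite /path_len /= addn0.
    by rewrite /greedy_path /= ffunE eqxx vT d_refl (d_gt0 uv) eqxx.
  + have xu : x != u by apply: contra_eqN dxv => /eqP ->; rewrite du2.
    exists [:: x; v]; split; last by rewrite /path_len /= dxv addn0 addn1.
    by rewrite /greedy_path /= !ffunE eqxx (negbTE xu) xT vS dxv du2 d_refl eqxx.
Qed.

Lemma greedy_len_upd_ge S u T v n : u != v ->
  greedy_len d (upd S u T) u v n -> (d u v <= n)%N.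
Proof.
move=> uv /(greedy_len_upd _ _ _ uv) [[_ ->] // | [du2 [x /and3P [_ /eqP dxv _] ->]]].
have xu : x != u by apply: contra_eqN dxv => /eqP ->; rewrite du2.
by rewrite du2 ltnS d_gt0 // eq_sym.
Qed.

Variable Z : R.

Definition dev_stretch (S : profile P) u (T : {set P}) v : R :=
  if v \in T then 1
  else if d u v == 1%N then Z
  else if [exists x, (d u x == 1%N) && relay S T v x] then 1
  else if [exists x, relay S T v x] then 3/2
  else Z.

Lemma stretch_upd S u T v : u != v ->
  stretch d Z (upd S u T) u v = dev_stretch S u T v.
Proof.
move=> uv; have G := greedy_len_upd S T _ uv.
have Gge n := @greedy_len_upd_ge S u T v n uv.
rewrite /dev_stretch; case: ifP => vT.
  rewrite (stretch_min Z (m := d u v)) ?divff ?pnatr_eq0 -?lt0n ?d_gt0 //.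
  by apply/G; left.
case: ifP => [/eqP du1|/negbT du1].
  by apply: stretch_none => n /G [[]|[]]; rewrite ?vT ?du1.
have du2 : d u v = 2%N by case: (d_1or2 uv) du1 => ->.
case: ifP => [/existsP [x /andP [/eqP dux rx]]|/negbT nnear].
  rewrite (stretch_min Z (m := 2)) ?du2 ?divff ?pnatr_eq0 //.
    by apply/G; right; split => //; exists x; rewrite ?dux.
  by move=> n /Gge; rewrite du2.
have far x : relay S T v x -> d u x = 2%N.
  move=> rx; have xu : x != u.
    by apply: contraTneq rx => ->; rewrite /relay du2 andbF.
  case: (d_1or2 xu); rewrite d_sym // => dux.
  by move/existsPn/(_ x): nnear; rewrite dux rx.
case: ifP => [/existsP [x rx]|/negbT nrel].
  rewrite (stretch_min Z (m := 3)) ?du2 //.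
    by apply/G; right; split => //; exists x; rewrite ?far.
  by move=> n /G [[]|[_ [y /far dy ->]]]; rewrite ?vT ?dy.
apply: stretch_none => n /G [[]|[_ [y ry _]]]; first by rewrite vT.
by move/existsPn/(_ y): nrel; rewrite ry.
Qed.

Lemma dev_stretch_ge1 S u T v : 3/2 <= Z -> 1 <= dev_stretch S u T v.
Proof. by move=> HZ; rewrite /dev_stretch; do !case: ifP => _; lra. Qed.

Lemma dev_stretch_subset S u (T1 T2 : {set P}) v : 3/2 <= Z -> T1 \subset T2 ->
  dev_stretch S u T2 v <= dev_stretch S u T1 v.
Proof.
move=> HZ sub; have relS x : relay S T1 v x -> relay S T2 v x := relay_subset sub.
have [vT2|vT2] := boolP (v \in T2); first by rewrite {1}/dev_stretch vT2 dev_stretch_ge1.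
have vT1 : v \notin T1 by apply: contra vT2; apply: (subsetP sub).
rewrite /dev_stretch (negbTE vT1) (negbTE vT2); case: ifP => // _.
have mono (a1 a2 b1 b2 : bool) : a1 ==> a2 -> b1 ==> b2 ->
    (if a2 then 1 else if b2 then 3/2 else Z) <= (if a1 then 1 else if b1 then 3/2 else Z).
  by case: a1 a2 b1 b2 => [] [] [] [] //= _ _; lra.
apply: mono; apply/implyP => /existsP [x]; last by move=> /relS rx; apply/existsP; exists x.
by move=> /andP [dux /relS rx]; apply/existsP; exists x; rewrite dux.
Qed.

Definition has_1edges (S : profile P) := forall v w, d v w = 1%N -> w \in S v.
Definition admissible u (T : {set P}) := contains_1nbrs d u T /\ dominating d u T.

Lemma admissible_dev_stretch_ltZ S u (T : {set P}) : u \notin T ->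
  (forall v, v != u -> dev_stretch S u T v < Z) -> admissible u T.
Proof.
move=> uT ltZ; have cont : contains_1nbrs d u T.
  move=> v duv; apply: contraT => vT; have := ltZ v.
  by rewrite eq_sym d_eq1_neq // /dev_stretch (negbTE vT) duv eqxx ltxx => /(_ isT).
split=> //; split=> // x xu xT; have := ltZ x xu.
have du2 : d u x = 2%N.
  by case: (d_1or2 (u:=u) (v:=x)); rewrite 1?eq_sym // => /cont; rewrite (negbTE xT).
rewrite /dev_stretch (negbTE xT) du2 /=.
case: ifP => [/existsP [y /andP [_ /and3P [yT /eqP dyx _]]] _|_]; first by exists y.
case: ifP => [/existsP [y /and3P [yT /eqP dyx _]] _|_]; first by exists y.
by rewrite ltxx.
Qed.

Lemma dev_stretch_admissible S u (T : {set P}) v :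
  has_1edges S -> admissible u T -> v != u ->
  dev_stretch S u T v = if v \in T then 1 else if hop11 u v then 1 else 3/2.
Proof.
move=> h1 [cont [uT dom]] vu; rewrite /dev_stretch; case: ifP => // /negbT vT.
have du2 : d u v = 2%N.
  by case: (d_1or2 (u:=u) (v:=v)); rewrite 1?eq_sym // => /cont; rewrite (negbTE vT).
have -> : [exists x, (d u x == 1%N) && relay S T v x] = hop11 u v.
  apply/existsP/existsP => [[x /andP [dux /and3P [_ dxv _]]]|[x /andP [/eqP dux /eqP dxv]]].
    by exists x; rewrite dux.
  by exists x; rewrite /relay dux (cont _ dux) dxv (h1 _ _ dxv) eqxx.
rewrite du2; case: ifP => // _.
have [y yT dyv] := dom v vu vT.
by rewrite ifT //; apply/existsP; exists y; rewrite /relay yT dyv (h1 _ _ dyv) eqxx.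
Qed.

Variable alpha : R.

Definition node_cost u (T : {set P}) v : R :=
  if v \in T then 1 + alpha else if hop11 u v then 1 else 3/2.

Lemma cost_upd S u (T : {set P}) : u \notin T ->
  cost d alpha Z (upd S u T) u =
  \sum_(v | v != u) (dev_stretch S u T v + alpha * (v \in T)%:R).
Proof.
move=> uT; rewrite /cost big_split /= -mulr_sumr ffunE eqxx sum_mem_card; last first.
  by move=> v; apply: contraTneq => ->.
by congr (_ + _); apply: eq_bigr => v vu; rewrite stretch_upd // eq_sym.
Qed.

Lemma cost_admissible S u (T : {set P}) : has_1edges S -> admissible u T ->
  cost d alpha Z (upd S u T) u = \sum_(v | v != u) node_cost u T v.
Proof.
move=> h1 adm; have uT : u \notin T by case: adm => _ [].
rewrite cost_upd //; apply: eq_bigr => v vu; rewrite dev_stretch_admissible // /node_cost.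
by case: (v \in T); rewrite ?mulr1 ?mulr0 ?addr0 // addrC.
Qed.

Section LargePenalty.
Hypothesis Ha : 0 < alpha.
(* [Z] exceeds the cost of every admissible strategy. *)
Hypothesis HZ : (2 + alpha) * (#|P|%:R + 1) <= Z.

Lemma penalty_bounds : [/\ 3/2 <= Z, 1 + alpha < Z & (2 + alpha) * #|P|%:R < Z].
Proof.
have := ler0n R #|P|; have := mulr_ge0 (ltW Ha) (ler0n R #|P|).
by move: HZ Ha; rewrite !mulrDr !mulrDl; split; nra.
Qed.

Lemma admissible_or_stretch_geZ S u (T : {set P}) : u \notin T ->
  admissible u T \/ exists2 v, v != u & Z <= dev_stretch S u T v.
Proof.
move=> uT.
have [/forallP ltZ|/forallPn [v]] := boolP [forall v, (v != u) ==> (dev_stretch S u T v < Z)].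
  by left; apply: (admissible_dev_stretch_ltZ (S := S)) => // v vu; apply: (implyP (ltZ v)).
by rewrite negb_imply -leNgt => /andP [vu geZ]; right; exists v.
Qed.

Lemma cost_admissible_ltZ S u (T : {set P}) : has_1edges S -> admissible u T ->
  cost d alpha Z (upd S u T) u < Z.
Proof.
move=> h1 adm; have [_ _ ltZ] := penalty_bounds; rewrite cost_admissible //.
apply: le_lt_trans ltZ; rewrite mulrC; apply: ler_sum_bound; last by have := Ha; lra.
by move=> v _; rewrite /node_cost; case: (v \in T); [|case: (hop11 u v)]; have := Ha; lra.
Qed.

Lemma cost_geZ S u (T : {set P}) : u \notin T ->
  (exists2 v, v != u & Z <= dev_stretch S u T v) -> Z <= cost d alpha Z (upd S u T) u.
Proof.
move=> uT [v vu geZ]; rewrite cost_upd //.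
have term_ge0 w : 0 <= dev_stretch S u T w + alpha * (w \in T)%:R.
  have [Z32 _ _] := penalty_bounds; have := dev_stretch_ge1 S u T w Z32.
  by have := mulr_ge0 (ltW Ha) (ler0n R (w \in T)); lra.
apply: le_trans (ler_term_sum (fun w _ => term_ge0 w) vu).
by have := mulr_ge0 (ltW Ha) (ler0n R (v \in T)); lra.
Qed.

Lemma admissible_or_cost_gt S u (T : {set P}) : has_1edges S -> admissible u (S u) ->
  u \notin T -> admissible u T \/ cost d alpha Z S u < cost d alpha Z (upd S u T) u.
Proof.
move=> h1 adm uT; have [|geZ] := admissible_or_stretch_geZ S uT; first by left.
right; rewrite -{1}(upd_id S u); apply: lt_le_trans (cost_geZ uT geZ).
exact: cost_admissible_ltZ.
Qed.

Lemma greedy_move_notin u (A T : {set P}) : u \notin A -> greedy_move u A T -> u \notin T.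
Proof.
move=> uA [[w [_ wu ->]]|[[w _ ->]|[w [w' [_ _ w'u ->]]]]].
- by rewrite in_setU in_set1 (negbTE uA) eq_sym (negbTE wu).
- by rewrite in_setD1 (negbTE uA) andbF.
- by rewrite in_setU in_set1 in_setD1 (negbTE uA) andbF eq_sym (negbTE w'u).
Qed.

Lemma nash_eq_greedy_eq S : valid_profile S ->
  nash_eq d alpha Z S -> greedy_eq d alpha Z S.
Proof. by move=> val ne u T mv; apply: ne; apply: greedy_move_notin mv. Qed.

(* Buying an edge to a node [v] at stretch [>= Z] costs [alpha] and brings its
   stretch down to [1] without increasing any other stretch. *)
Lemma greedy_eq_stretch_ltZ S u v : valid_profile S -> greedy_eq d alpha Z S ->
  v != u -> dev_stretch S u (S u) v < Z.
Proof.
move=> val ge vu; rewrite ltNge; apply/negP => geZ.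
have [Z32 Z1a _] := penalty_bounds.
have vS : v \notin S u by apply: contraTN geZ => vS; rewrite /dev_stretch vS -ltNge; lra.
have uT : u \notin S u :|: [set v] by rewrite !inE negb_or (val u) eq_sym vu.
apply: (ge u (S u :|: [set v])); first by left; exists v.
rewrite -[in X in _ < X](upd_id S u) !cost_upd // ?(val u) //.
have vT : v \in S u :|: [set v] by rewrite !inE eqxx orbT.
have at_v : dev_stretch S u (S u :|: [set v]) v + alpha * (v \in S u :|: [set v])%:R <
            dev_stretch S u (S u) v + alpha * (v \in S u)%:R.
  by rewrite {1}/dev_stretch vT (negbTE vS) mulr1 mulr0 addr0; lra.
apply: (ler_ltr_sum (i0 := v)) => // w wu; have [->|wv] := eqVneq w v; first exact: ltW.
rewrite in_setU in_set1 (negbTE wv) orbF lerD2r.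
by apply: dev_stretch_subset => //; apply: subsetUl.
Qed.

Lemma greedy_eq_admissible S : valid_profile S -> greedy_eq d alpha Z S ->
  has_1edges S /\ forall u, admissible u (S u).
Proof.
move=> val ge; have adm u : admissible u (S u).
  by apply: (admissible_dev_stretch_ltZ (S := S)) => // v; apply: greedy_eq_stretch_ltZ.
by split=> // v w dvw; case: (adm v) => /(_ w dvw).
Qed.

Lemma MaxDSG_mem u v : (v \in MaxDSG d u) = (v != u) && ~~ ((d u v == 2%N) && hop11 u v).
Proof. by rewrite ffunE inE. Qed.

Lemma has_1edges_MaxDSG : has_1edges (MaxDSG d).
Proof. by move=> v w dvw; rewrite MaxDSG_mem dvw andbT eq_sym d_eq1_neq. Qed.

Lemma admissible_MaxDSG u : admissible u (MaxDSG d u).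
Proof.
split; first by move=> v duv; apply: has_1edges_MaxDSG.
split=> [|x xu]; first by rewrite MaxDSG_mem eqxx.
rewrite MaxDSG_mem xu negbK => /andP [_ /existsP [y /andP [/eqP duy /eqP dyx]]].
by exists y => //; apply: has_1edges_MaxDSG.
Qed.

Lemma node_cost_MaxDSG_le u (T : {set P}) v : alpha <= 1/2 -> admissible u T -> v != u ->
  node_cost u (MaxDSG d u) v <= node_cost u T v.
Proof.
move=> ha [cont _] vu; have a0 := Ha; rewrite /node_cost MaxDSG_mem vu /=.
case: (d_1or2 (u:=u) (v:=v)); rewrite 1?eq_sym // => duv; rewrite duv /=.
  by rewrite (cont _ duv).
by case: (hop11 u v); case: (v \in T); rewrite /= ?lexx ?lerDl ?(ltW a0) //; lra.
Qed.

Lemma node_cost_MaxDSG_lt u (T : {set P}) : alpha < 1/2 -> admissible u T ->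
  T != MaxDSG d u -> exists2 v, v != u & node_cost u (MaxDSG d u) v < node_cost u T v.
Proof.
move=> ha [cont [uT _]] neq; have a0 := Ha.
have [v vTM] : exists v, (v \in T) != (v \in MaxDSG d u).
  apply/existsP; apply: contraNT neq => /existsPn eqTM; apply/eqP/setP => v.
  by have := eqTM v; rewrite negbK => /eqP.
have vu : v != u by apply: contraNneq vTM => ->; rewrite (negbTE uT) MaxDSG_mem eqxx.
exists v => //; move: vTM; rewrite /node_cost MaxDSG_mem vu /=.
case: (d_1or2 (u:=u) (v:=v)); rewrite 1?eq_sym // => duv; rewrite duv /=.
  by rewrite (cont _ duv).
by case: (hop11 u v); case: (v \in T) => //= _; lra.
Qed.

Lemma nash_eq_MaxDSG S : alpha < 1/2 -> valid_profile S -> nash_eq d alpha Z S ->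
  S = MaxDSG d.
Proof.
move=> ha val ne; have [h1 adm] := greedy_eq_admissible val (nash_eq_greedy_eq val ne).
apply/ffunP => u; apply/eqP; apply: contraT => neq.
have [v vu lt] := node_cost_MaxDSG_lt ha (adm u) neq.
case: (ne u (MaxDSG d u)); first by case: (admissible_MaxDSG u) => _ [].
rewrite -[in X in _ < X](upd_id S u) !cost_admissible //; last exact: admissible_MaxDSG.
apply: (ler_ltr_sum (i0 := v)) => // w wu.
by apply: node_cost_MaxDSG_le; rewrite ?ltW.
Qed.

Lemma MaxDSG_nash_eq : alpha < 1/2 -> nash_eq d alpha Z (MaxDSG d).
Proof.
move=> ha u T uT; have h1 := has_1edges_MaxDSG.
have [adm|] := admissible_or_cost_gt h1 (admissible_MaxDSG u) uT.
  rewrite -[in X in _ < X](upd_id (MaxDSG d) u).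
  rewrite !cost_admissible //; last exact: admissible_MaxDSG.
  apply/negP; rewrite -leNgt; apply: ler_sum => v vu.
  by apply: node_cost_MaxDSG_le; rewrite ?ltW.
by move=> lt; apply/negP; rewrite -leNgt ltW.
Qed.

Definition W2_of u (T : {set P}) := [set v in T | d u v == 2%N].
Definition W2plus_of S u (T : {set P}) := W2_of u T :&: W11 d S u.
Definition base_cost u v : R :=
  if d u v == 1%N then 1 + alpha else if hop11 u v then 1 else 3/2.

Lemma W2_of_subset u (A B : {set P}) : A \subset B -> W2_of u A \subset W2_of u B.
Proof. by move=> /subsetP sub; apply/subsetP => v; rewrite !inE => /andP [/sub -> ->]. Qed.

Lemma W11_hop11 S u v : has_1edges S -> (v \in W11 d S u) = (v != u) && hop11 u v.
Proof.
move=> h1; rewrite inE; congr (_ && _); apply/existsP/existsP => -[x].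
  by case/and4P => dux dxv _ _; exists x; rewrite dux.
by case/andP => /eqP dux /eqP dxv; exists x; rewrite (h1 _ _ dux) (h1 _ _ dxv) dux dxv eqxx.
Qed.

Lemma node_cost_split S u T v : has_1edges S -> admissible u T -> v != u ->
  node_cost u T v = base_cost u v + 1/2 * (v \in W2plus_of S u T)%:R
                    + (alpha - 1/2) * (v \in W2_of u T)%:R.
Proof.
move=> h1 [cont _] vu.
rewrite /node_cost /base_cost /W2plus_of /W2_of in_setI (W11_hop11 _ _ h1) !inE vu /=.
case: (d_1or2 (u:=u) (v:=v)); rewrite 1?eq_sym // => duv; rewrite duv /=.
  by rewrite (cont _ duv) !mulr0 !addr0.
by rewrite andbT; case: (v \in T); case: (hop11 u v); rewrite /= ?mulr0 ?mulr1 ?addr0; lra.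
Qed.

Lemma cost_decomposition S u T : has_1edges S -> admissible u T ->
  cost d alpha Z (upd S u T) u =
  \sum_(v | v != u) base_cost u v + 1/2 * #|W2plus_of S u T|%:R
  + (alpha - 1/2) * #|W2_of u T|%:R.
Proof.
move=> h1 adm; have uT : u \notin T by case: adm => _ [].
have Tu v : v \in T -> v != u by apply: contraTneq => ->.
rewrite cost_admissible // (eq_bigr _ (fun v vu => node_cost_split h1 adm vu)).
rewrite !big_split /= -!mulr_sumr !sum_mem_card // => v; rewrite !inE.
  by case/andP => /Tu.
by case/andP => /andP [/Tu].
Qed.

Lemma admissible_superset u (A B : {set P}) : admissible u A -> A \subset B ->
  u \notin B -> admissible u B.
Proof.
move=> [cont [_ dom]] /subsetP sub uB; split=> [v /cont /sub //|]; split=> // x xu xB.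
have [y yA dyx] := dom x xu (contra (@sub x) xB).
by exists y; rewrite ?sub.
Qed.

(* For [alpha >= 1/2] an extra edge never pays off: it can only enlarge
   [W2_of] and [W2plus_of]. *)
Lemma greedy_eq_del_swap S : 1/2 <= alpha -> has_1edges S ->
  (forall u, admissible u (S u)) ->
  (forall u N', del_or_swap u (S u) N' -> admissible u N' ->
     cost d alpha Z S u <= cost d alpha Z (upd S u N') u) ->
  greedy_eq d alpha Z S.
Proof.
move=> ha h1 adm del_swap u T mv.
have uT : u \notin T by apply: greedy_move_notin mv; case: (adm u) => _ [].
have [admT|] := admissible_or_cost_gt h1 (adm u) uT; last first.
  by move=> lt; apply/negP; rewrite -leNgt ltW.
apply/negP; rewrite -leNgt; case: mv => [[w [_ _ ET]]|ds]; last exact: del_swap.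
have sub : S u \subset T by rewrite ET subsetUl.
rewrite -[in X in X <= _](upd_id S u) !cost_decomposition //.
have W2S := subset_leq_card (W2_of_subset u sub).
have W2pS := subset_leq_card (setSI (W11 d S u) (W2_of_subset u sub)).
move: W2S W2pS; rewrite -!(ler_nat R) => W2S W2pS.
have a12 : 0 <= alpha - 1/2 by lra.
have := ler_wpM2l a12 W2S; lra.
Qed.

Lemma DSG_admissible S : DSG d S -> has_1edges S /\ forall u, admissible u (S u).
Proof. by case=> h1 dom _; split=> // u; split=> // v /h1. Qed.

Lemma greedy_eq_DSG S : alpha = 1/2 -> valid_profile S -> greedy_eq d alpha Z S -> DSG d S.
Proof.
move=> ha val ge; have [h1 adm] := greedy_eq_admissible val ge.
split=> // [u|u [N' [ds cont dom lt]]]; first by case: (adm u).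
apply: (ge u N'); first by right.
rewrite -[in X in _ < X](upd_id S u) !cost_decomposition //.
by move: lt; rewrite -(ltr_nat R) ha; lra.
Qed.

Lemma DSG_greedy_eq S : alpha = 1/2 -> DSG d S -> greedy_eq d alpha Z S.
Proof.
move=> ha dsg; have [h1 adm] := DSG_admissible dsg.
apply: greedy_eq_del_swap => //; first by rewrite ha.
move=> u N' ds [cont dom]; case: dsg => _ _ /(_ u) no_better.
rewrite -[in X in X <= _](upd_id S u) !cost_decomposition //.
have : (#|W2plus_of S u (S u)| <= #|W2plus_of S u N'|)%N.
  by rewrite leqNgt; apply/negP => lt; apply: no_better; exists N'.
by rewrite -(ler_nat R) ha; lra.
Qed.

Lemma W2plus_of_MaxDSG S u : has_1edges S -> W2plus_of S u (MaxDSG d u) = set0.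
Proof.
move=> h1; apply/setP => v.
rewrite /W2plus_of /W2_of in_setI (W11_hop11 _ _ h1) !inE MaxDSG_mem.
by case: (v != u); case: (d u v == 2%N); case: (hop11 u v).
Qed.

Lemma nash_eq_DSG_W2plus0 S : alpha = 1/2 -> valid_profile S -> nash_eq d alpha Z S ->
  DSG d S /\ forall u, W2plus d S u = set0.
Proof.
move=> ha val ne; have dsg := greedy_eq_DSG ha val (nash_eq_greedy_eq val ne).
split=> // u; have [h1 adm] := DSG_admissible dsg.
have := ne u (MaxDSG d u); rewrite MaxDSG_mem eqxx => /(_ isT).
rewrite -[in X in _ < X](upd_id S u) !cost_decomposition ?W2plus_of_MaxDSG //; last first.
  exact: admissible_MaxDSG.
rewrite cards0 ha => not_lt; apply/eqP; rewrite -cards_eq0 -leqn0 -(ler_nat R).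
by apply: contra_notT not_lt; rewrite -ltNge => gt0; lra.
Qed.

Lemma DSG_W2plus0_nash_eq S : alpha = 1/2 -> DSG d S ->
  (forall u, W2plus d S u = set0) -> nash_eq d alpha Z S.
Proof.
move=> ha dsg W2p0 u T uT; have [h1 adm] := DSG_admissible dsg.
have [admT|] := admissible_or_cost_gt h1 (adm u) uT; last first.
  by move=> lt; apply/negP; rewrite -leNgt ltW.
rewrite -[in X in _ < X](upd_id S u) !cost_decomposition //.
have -> : W2plus_of S u (S u) = set0 by exact: W2p0.
by rewrite cards0 ha; have := ler0n R #|W2plus_of S u T|; lra.
Qed.

Lemma MinDSG_greedy_eq S : 1/2 < alpha -> MinDSG d S -> greedy_eq d alpha Z S.
Proof.
move=> ha [dsg minW2]; have [h1 adm] := DSG_admissible dsg.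
apply: greedy_eq_del_swap => //; first exact: ltW.
move=> u N' ds [cont dom]; case: dsg => _ _ /(_ u) no_better.
rewrite -[in X in X <= _](upd_id S u) !cost_decomposition //.
have : (#|W2plus_of S u (S u)| <= #|W2plus_of S u N'|)%N.
  by rewrite leqNgt; apply/negP => lt; apply: no_better; exists N'.
have : (#|W2_of u (S u)| <= #|W2_of u N'|)%N by apply: minW2.
rewrite -!(ler_nat R) => W2S W2pS.
have a12 : 0 <= alpha - 1/2 by lra.
have := ler_wpM2l a12 W2S; lra.
Qed.

End LargePenalty.

End GreedyRoutingGame.

Theorem theorem2p8 (R : realFieldType) (P : finType) (d : P -> P -> nat) (alpha : R) :
  is_12metric d -> 0 < alpha ->
  exists Z0 : R, forall Z : R, Z0 <= Z ->
  [/\ alpha < 1 / 2 ->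
        forall S : profile P, valid_profile S ->
          (nash_eq d alpha Z S <-> S = MaxDSG d),
      alpha = 1 / 2 ->
        forall S : profile P, valid_profile S ->
          (greedy_eq d alpha Z S <-> DSG d S) /\
          (nash_eq d alpha Z S <-> DSG d S /\ forall u, W2plus d S u = set0)
    & 1 / 2 < alpha ->
        forall S : profile P, valid_profile S ->
          MinDSG d S -> greedy_eq d alpha Z S].
Proof.
move=> Hd Ha; exists ((2 + alpha) * (#|P|%:R + 1)) => Z HZ; split.
- move=> ha S val; split; first exact: nash_eq_MaxDSG.
  by move=> ->; apply: MaxDSG_nash_eq.
- move=> ha S val; split; split.
  + exact: greedy_eq_DSG.
  + exact: DSG_greedy_eq.
  + exact: nash_eq_DSG_W2plus0.
  + by case; apply: DSG_W2plus0_nash_eq.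
- by move=> ha S _; apply: MinDSG_greedy_eq.
Qed.
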